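(* Let $G$ be a finite primitive permutation group of O'Nan–Scott type $\mathrm{HA}$, $\mathrm{HS}$, $\mathrm{HC}$, $\mathrm{TW}$, $\mathrm{SD}$ or $\mathrm{CD}$, and let $M$ be a point stabilizer of $G$. Then $M$ is a perfect code of $G$.
   Context: All groups are finite. For a group $G$ with identity $e$ and an inverse-closed subset $S\subseteq G\setminus\{e\}$, the Cayley graph $\mathrm{Cay}(G,S)$ has vertex set $G$ and edges $\{g,sg\}$ for $s\in S$, $g\in G$. A perfect code in a graph is a set $C$ of vertices that is independent and such that every vertex outside $C$ is adjacent to exactly one vertex of $C$. A subset (in particular a subgroup) $C$ of a group $G$ is called a perfect code of $G$ if there is a Cayley graph $\mathrm{Cay}(G,S)$ of $G$ in which $C$ is a perfect code. The types $\mathrm{HA},\mathrm{HS},\mathrm{HC},\mathrm{TW},\mathrm{SD},\mathrm{CD},\mathrm{AS},\mathrm{PA}$ of primitive groups are those of the O'Nan–Scott classification (e.g. as in Praeger, 1997). *)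

From mathcomp Require Import all_boot all_fingroup all_solvable.

Set Implicit Arguments.
Unset Strict Implicit.
Unset Printing Implicit Defensive.

Local Open Scope group_scope.

Section PerfectCode.
Variable gT : finGroupType.

(* In Cay(G,S) the edges are {g, s g}, s in S: h is adjacent to g iff h g^-1 \in S. *)
Definition cay_adj (S : {set gT}) (g h : gT) : bool := h * g^-1 \in S.

Definition cayley_set (G S : {set gT}) : Prop :=
  S \subset G /\ (1 \notin S) /\ (forall s, s \in S -> s^-1 \in S).

Definition perfect_code_in (G S C : {set gT}) : Prop :=
  [/\ C \subset G,
      (forall c1 c2, c1 \in C -> c2 \in C -> ~~ cay_adj S c1 c2) &
      (forall g, g \in G :\: C -> #|[set c in C | cay_adj S g c]| = 1%N)].

Definition perfect_code_of (G C : {set gT}) : Prop :=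
  C \subset G /\ exists S, cayley_set G S /\ perfect_code_in G S C.
End PerfectCode.

Section ONanScott.
Variable T : finType.
Implicit Types (G N H : {group {perm T}}).

Definition min_normal N G : bool := (N \subset G) && minnormal N G.

Definition unique_min_normal N G : Prop :=
  min_normal N G /\ forall N' : {group {perm T}}, min_normal N' G -> N' = N.

(* Ti is a simple direct factor of the nonabelian minimal normal subgroup N
   (i.e. a nonabelian simple normal subgroup of N). *)
Definition simple_factor (Ti : {group {perm T}}) N : bool := [&& Ti <| N, simple Ti & ~~ abelian Ti].

(* the natural projection of N = Ti x C_N(Ti) onto the factor Ti *)
Definition factor_proj (Ti : {group {perm T}}) N (y : {perm T}) : {perm T} := divgr Ti 'C_N(Ti) y.

Definition subdirect (H : {set {perm T}}) N : Prop :=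
  forall Ti : {group {perm T}}, simple_factor Ti N ->
    [set factor_proj Ti N y | y in H] = Ti.

Definition typeHA G : Prop :=
  exists N, min_normal N G /\ abelian N.

Definition typeHS G : Prop :=
  exists N1 N2 : {group {perm T}}, [/\ min_normal N1 G, min_normal N2 G, N1 != N2,
                    ~~ abelian N1 & simple N1].

(* G has two distinct minimal normal subgroups, isomorphic to T^k, k >= 2 *)
Definition typeHC G : Prop :=
  exists N1 N2 : {group {perm T}}, [/\ min_normal N1 G, min_normal N2 G, N1 != N2,
                    ~~ abelian N1 & ~~ simple N1].

(* unique minimal normal subgroup N = T^k, T nonabelian simple, k >= 2 *)
Definition unique_nonab_nonsimple N G : Prop :=
  [/\ unique_min_normal N G, ~~ abelian N & ~~ simple N].

Definition typeTW G : Prop :=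
  exists N, unique_nonab_nonsimple N G /\
    forall x : T, 'C_N[x | 'P] = 1.

(* SD: N_alpha is a full diagonal subgroup: subdirect in N and isomorphic to T *)
Definition typeSD G : Prop :=
  exists N, unique_nonab_nonsimple N G /\
    forall x : T, subdirect 'C_N[x | 'P] N /\
      exists Ti : {group {perm T}}, simple_factor Ti N && ('C_N[x | 'P] \isog Ti).

(* CD: N_alpha is subdirect in N and isomorphic to T^l with l >= 2
   (a nontrivial subdirect subgroup of T^k is isomorphic to some T^l, l >= 1,
    and l >= 2 exactly when it is not isomorphic to T) *)
Definition typeCD G : Prop :=
  exists N, unique_nonab_nonsimple N G /\
    forall x : T, subdirect 'C_N[x | 'P] N /\
      forall Ti : {group {perm T}}, simple_factor Ti N -> ~~ ('C_N[x | 'P] \isog Ti).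

End ONanScott.

From mathcomp Require Import all_boot all_fingroup all_solvable.

Set Implicit Arguments.
Unset Strict Implicit.
Unset Printing Implicit Defensive.

Local Open Scope group_scope.

(* A subgroup M of G that has a complement K (M :&: K = 1, M * K = G) is a
   perfect code of G: with S = K minus 1, every right coset K g meets M in
   exactly one point.  For a point stabiliser G_x of a primitive group, every
   nontrivial normal subgroup N is transitive, so G = G_x N and it suffices
   that N_x = G_x :&: N has a complement in N.  For a minimal normal subgroup
   N of type HA, HS, HC or TW, N_x = 1: N is regular, being abelian,
   centralised by another transitive minimal normal subgroup, or regular by
   definition.  In types SD and CD, N = T_1 x ... x T_k with T_i simple and
   N_x projects onto every T_i; any such subdirect subgroup D has a complement,
   by induction on k: D meets T_1 trivially or contains it, and in both cases
   a complement of (D T_1) :&: (T_2 x ... x T_k) lifts to one of D. *)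

Section Complements.
Variable gT : finGroupType.
Implicit Types G M N K : {group gT}.

Lemma card_compl_rcosetI G M K g :
  K \in [complements to M in G] -> g \in G -> #|M :&: K :* g| = 1%N.
Proof.
case/complP => tiMK defG Gg.
have /mulsgP[m k Mm Kk defg] : g^-1 \in M * K by rewrite defG groupV.
suff -> : M :&: K :* g = [set m^-1] by rewrite cards1.
apply/setP => c; rewrite !inE mem_rcoset defg.
apply/andP/eqP => [[Mc Kc] | ->]; last by rewrite groupV Mm mulKg.
have : c * m \in M :&: K.
  by rewrite inE groupM //= -(mulgK k (c * m)) -(mulgA c) groupM ?groupV.
by rewrite tiMK => /set1P/(canRL (mulgK m)); rewrite mul1g.
Qed.

Lemma perfect_code_of_splits G M : [splits G, over M] -> perfect_code_of G M.
Proof.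
case/splitsP => K complK; have /complP[tiMK defG] := complK.
have sMG : M \subset G by rewrite -defG mulG_subl.
split=> //; exists (K :\ 1); split; [split; [|split] | split] => //.
- by rewrite (subset_trans (subsetDl _ _)) // -defG mulG_subr.
- by rewrite setD11.
- by move=> s; rewrite !inE groupV invg_eq1.
- move=> c1 c2 Mc1 Mc2; rewrite /cay_adj !inE negb_and negbK orbC -implybE.
  apply/implyP => Kc; have : c2 * c1^-1 \in M :&: K by rewrite inE groupM ?groupV.
  by rewrite tiMK => /set1P ->.
move=> g /setDP[Gg notMg]; rewrite -(card_compl_rcosetI complK Gg).
apply: eq_card => c; rewrite !inE /cay_adj !inE mem_rcoset.
case Mc: (c \in M) => //=; rewrite -eq_mulgV1.
by case: eqP Mc notMg => // -> ->.
Qed.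

Lemma splits_mulgI G M N : M * N = G -> [splits N, over M :&: N] -> [splits G, over M].
Proof.
move=> defG /splitsP[K /complP[tiMNK defN]]; apply/splitsP; exists K; apply/complP.
have sKN : K \subset N by rewrite -defN mulG_subr.
split; first by rewrite -tiMNK -setIA (setIidPr sKN).
by rewrite -defG -defN mulgA (mulGSid (subsetIl M N)).
Qed.

Lemma splits_trivg G : [splits G, over 1].
Proof. by apply/splitsP; exists G; apply/complP; rewrite setI1g mul1g. Qed.

End Complements.

Section DprodSplitting.
Variables (gT : finGroupType) (X N' N D : {group gT}).
Hypotheses (defN : X \x N' = N) (sDN : D \subset N).

Let D' := (D <*> X) :&: N'.

Let cXN' : N' \subset 'C(X). Proof. by have [] := dprodP defN. Qed.
Let nsXN : X <| N. Proof. exact: (dprod_normal2 defN).1. Qed.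
Let nDX : D \subset 'N(X). Proof. exact: subset_trans sDN (normal_norm nsXN). Qed.

Let defDX : D <*> X = X * D'.
Proof.
have [_ defXN' _ _] := dprodP defN.
rewrite /D' setIC group_modl ?joing_subr // defXN'.
by apply/esym/setIidPr; rewrite join_subG sDN normal_sub.
Qed.

Lemma dprod_mul_cent_restr (Y : {group gT}) :
  Y \subset N' -> D * 'C_N(Y) = N -> D' * 'C_N'(Y) = N'.
Proof.
move=> sYN' defDC; have [_ defXN' _ _] := dprodP defN.
have cXY : X \subset 'C(Y) by rewrite centsC (subset_trans sYN').
have defC : 'C_N(Y) = X * 'C_N'(Y) by rewrite -defXN' -group_modl.
rewrite /D' setIC group_modr ?subsetIl // (norm_joinEl nDX).
by rewrite -mulgA -defC defDC; apply/setIidPl; rewrite -defXN' mulG_subr.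
Qed.

Variable K : {group gT}.
Hypothesis complK : K \in [complements to D' in N'].

Let sKN' : K \subset N'. Proof. by have /complP[_ <-] := complK; rewrite mulG_subr. Qed.

Lemma dprod_compl_sub : X \subset D -> K \in [complements to D in N].
Proof.
move=> sXD; have /complP[tiD'K defN'] := complK.
have [_ defXN' _ _] := dprodP defN.
have defD : D :=: X * D' by rewrite -defDX (joing_idPl sXD).
apply/complP; split; last by rewrite defD -mulgA defN' defXN'.
by rewrite -tiD'K /D' (joing_idPl sXD) -setIA (setIidPr sKN').
Qed.

Lemma dprod_compl_TI : D :&: X = 1 -> (X <*> K)%G \in [complements to D in N].
Proof.
move=> tiDX; have /complP[tiD'K defN'] := complK.
have [_ defXN' _ _] := dprodP defN.
have defXK : X <*> K = X * K := cent_joinEr (subset_trans sKN' cXN').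
have meetDX_XK : (D <*> X) :&: (X * K) = X.
  rewrite setIC -group_modl ?joing_subr //.
  have -> : K :&: (D <*> X) = 1 by rewrite -tiD'K /D' -setIA (setIidPr sKN') setIC.
  by rewrite mulg1.
apply/complP; rewrite /= defXK; split.
  by rewrite -(setIidPl (joing_subl D X)) -setIA meetDX_XK.
by rewrite mulgA -(norm_joinEl nDX) defDX -mulgA defN' defXN'.
Qed.

End DprodSplitting.

Section SimpleFactors.
Variable gT : finGroupType.
Implicit Types D X N : {group gT}.

Lemma simple_factor_meet X N D :
  simple X -> X <| N -> D \subset N -> D * 'C_N(X) = N -> D :&: X = 1 \/ X \subset D.
Proof.
move=> /simpleP[_ simX] /andP[sXN nXN] sDN defDC.
have nDX_X : X \subset 'N(D :&: X).
  have nDDX : D \subset 'N(D :&: X) by rewrite normsI ?normG ?(subset_trans sDN).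
  have nCDX : 'C_N(X) \subset 'N(D :&: X).
    by rewrite cents_norm // (subset_trans (subsetIr _ _)) ?centS ?subsetIr.
  by rewrite (subset_trans sXN) // -defDC mul_subG.
have /simX[tiDX | /setIidPr sXD] : (D :&: X)%G <| X by rewrite /normal subsetIr nDX_X.
  by left.
by right.
Qed.

Lemma dprod_simple_splits X (N' : {group gT}) N D :
    X \x N' = N -> simple X -> D \subset N -> D * 'C_N(X) = N ->
  [splits N', over (D <*> X) :&: N'] -> [splits N, over D].
Proof.
move=> defN simX sDN defDC /splitsP[K complK]; apply/splitsP.
have [tiDX | sXD] := simple_factor_meet simX (dprod_normal2 defN).1 sDN defDC.
  by exists (X <*> K)%G; apply: (dprod_compl_TI defN sDN complK tiDX).
by exists K; apply: (dprod_compl_sub defN sDN complK sXD).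
Qed.

Lemma bigdprod_mul_cent (I : eqType) (r : seq I) (F : I -> {group gT}) N i :
  \big[dprod/1]_(j <- r) F j = N -> i \in r -> F i * 'C_N(F i) = N.
Proof.
move=> defN ri; rewrite (big_rem i ri) /= in defN.
have [[_ K _ defK] defFK cFK _] := dprodP defN; rewrite defK in defFK cFK.
have sFN : F i \subset N by rewrite -defFK mulG_subl.
have sKN : K \subset N by rewrite -defFK mulG_subr.
by apply/eqP; rewrite eqEsubset mul_subG ?subsetIl //= -{1}defFK mulgS // subsetI sKN.
Qed.

Lemma bigdprod_simple_splits (I : eqType) (r : seq I) (F : I -> {group gT}) N D :
    \big[dprod/1]_(i <- r) F i = N -> {in r, forall i, simple (F i)} ->
  D \subset N -> {in r, forall i, D * 'C_N(F i) = N} -> [splits N, over D].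
Proof.
elim: r N D => [|i r IHr] N D.
  by rewrite big_nil => <- _ /trivgP-> _; apply: splits_trivg.
rewrite big_cons => defN simF sDN defDC.
have [[_ N' _ defN'] _ _ _] := dprodP defN; rewrite defN' in defN.
have ir := mem_head i r; have r_ir : {subset r <= i :: r} := mem_behead (s := i :: r).
apply: (dprod_simple_splits defN (simF i ir) sDN (defDC i ir)).
apply: (IHr _ _ defN' (fun j rj => simF j (r_ir j rj)) (subsetIr _ _)) => j rj.
apply: (dprod_mul_cent_restr defN sDN _ (defDC j (r_ir j rj))).
by rewrite -(bigdprod_mul_cent defN' rj) mulG_subl.
Qed.

Lemma divgr_surj_mul_cent X N D :
    X * 'C_N(X) = N -> D \subset N -> [set divgr X 'C_N(X) y | y in D] = X ->
  D * 'C_N(X) = N.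
Proof.
move=> defN sDN defX; apply/eqP; rewrite eqEsubset mul_subG ?subsetIl //=.
have sXDC : X \subset D * 'C_N(X).
  apply/subsetP => z; rewrite -{1}defX => /imsetP[y Dy ->].
  have XCy : y \in X * 'C_N(X) by rewrite defN (subsetP sDN).
  by rewrite /divgr mem_mulg ?groupV ?mem_remgr.
by rewrite -{1}defN (subset_trans (mulSg _ sXDC)) // -mulgA mulGid.
Qed.

Lemma charsimple_factor_nonabelian N X :
  charsimple N -> ~~ abelian N -> X :!=: 1 -> X * 'C_N(X) = N -> ~~ abelian X.
Proof.
move=> /charsimpleP[_ chN] nabN ntX defN; apply: contra nabN => abX.
have sXZ : X \subset 'Z(N).
  by rewrite subsetI -{1}defN mulG_subl centsC -{1}defN mul_subG ?subsetIr.
by rewrite -(chN _ (subG1_contra sXZ ntX) (center_char N)) center_abelian.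
Qed.

End SimpleFactors.

Lemma charsimple_subdirect_splits (T : finType) (N D : {group {perm T}}) :
  charsimple N -> ~~ abelian N -> D \subset N -> subdirect D N -> [splits N, over D].
Proof.
move=> chN nabN sDN sdD; have [H [sHN simH [I sIA defN]]] := charsimple_dprod chN.
pose F (f : {perm {perm T}}) := <<[set f x | x in H]>>%G.
have defF f (Af : f \in Aut N) : F f :=: autm Af @* H.
  by rewrite /= -{1}(autmE Af) -morphimEsub ?genGid.
have defNF : \big[dprod/1]_(f <- enum I) F f = N.
  by rewrite big_enum -defN; apply: eq_bigr => f /(subsetP sIA) Af; rewrite defF morphimEsub ?autmE.
have simF f : f \in enum I -> simple (F f).
  rewrite mem_enum => /(subsetP sIA) Af.
  by rewrite defF -(isog_simple (sub_isog sHN (injm_autm Af))).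
apply: (bigdprod_simple_splits defNF simF sDN) => f If.
have defFC := bigdprod_mul_cent defNF If.
apply: (divgr_surj_mul_cent defFC sDN (sdD _ _)).
have ntF : F f :!=: 1 by case/simpleP: (simF f If).
rewrite /simple_factor /normal simF // (charsimple_factor_nonabelian chN nabN ntF defFC) andbT.
by rewrite -{1 2}defFC mulG_subl mul_subG ?normG ?cents_norm ?subsetIr.
Qed.

Lemma cent_transitive_astab1 (T : finType) (A B : {group {perm T}}) (x : T) :
  [transitive A, on [set: T] | 'P] -> B \subset 'C(A) -> 'C_B[x | 'P] = 1.
Proof.
move=> trA cAB; apply/trivgP/subsetP => a /setIP[Ba /astab1P]; rewrite /= apermE => ax.
apply/set1P/permP => y; have [b Ab ->] := atransP2 trA (in_setT x) (in_setT y).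
by rewrite perm1 /= apermE -permM -(centP (subsetP cAB a Ba) b Ab) permM ax.
Qed.

Section MinimalNormal.
Variables (T : finType) (G : {group {perm T}}).
Implicit Type N : {group {perm T}}.

Lemma min_normal_nt_normal N : min_normal N G -> N <| G /\ N :!=: 1.
Proof.
by case/andP => sNG /mingroupP[/andP[ntN nNG] _]; rewrite /normal sNG nNG.
Qed.

Lemma min_normal_cents N1 N2 :
  min_normal N1 G -> min_normal N2 G -> N1 != N2 -> N2 \subset 'C(N1).
Proof.
move=> minN1 minN2 neN12.
have [/andP[sN1G nN1G] ntN1] := min_normal_nt_normal minN1.
have [/andP[sN2G nN2G] _] := min_normal_nt_normal minN2.
have tiN12 : N1 :&: N2 = 1.
  apply/eqP; apply: contraR neN12 => ntN12.
  case/andP: minN1 => _ /mingroupP[_ min1]; case/andP: minN2 => _ /mingroupP[_ min2].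
  have defN1 : N1 :&: N2 = N1 by apply: min1; rewrite ?subsetIl // ntN12 normsI.
  by apply/eqP/val_inj/min2; rewrite ?ntN1 ?nN1G // -defN1 subsetIr.
apply/commG1P/trivgP; rewrite -tiN12 setIC commg_subI // subsetI subxx.
  by rewrite (subset_trans sN2G).
by rewrite (subset_trans sN1G).
Qed.

Hypothesis primG : [primitive G, on [set: T] | 'P].

Lemma prim_normal_transitive N :
  N <| G -> N :!=: 1 -> [transitive N, on [set: T] | 'P].
Proof.
move=> nsNG ntN; case: (prim_trans_norm primG nsNG) => // sNC.
by case/negP: ntN; rewrite -subG1 (subset_trans sNC (aperm_faithful G)).
Qed.

Lemma astab1_splits N x :
    min_normal N G -> [splits N, over 'C_N[x | 'P]] ->
  [splits G, over 'C_G[x | 'P]].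
Proof.
case/min_normal_nt_normal => nsNG ntN splitN; have [trG _] := andP primG.
have sNG := normal_sub nsNG.
have defG : 'C_G[x | 'P] * N = G.
  exact/(subgroup_transitiveP (in_setT x) sNG trG)/prim_normal_transitive.
by apply: (splits_mulgI defG); rewrite setIC setIA (setIidPl sNG).
Qed.

Lemma cent_min_normal_splits N1 N2 x :
  min_normal N1 G -> N2 \subset 'C(N1) -> [splits N2, over 'C_N2[x | 'P]].
Proof.
case/min_normal_nt_normal => nsN1G ntN1 cN12.
by rewrite (cent_transitive_astab1 x (prim_normal_transitive nsN1G ntN1) cN12) splits_trivg.
Qed.

End MinimalNormal.

Theorem theorem1p4 (T : finType) (G : {group {perm T}}) (x : T) :
  [primitive G, on [set: T] | 'P] ->
  typeHA G \/ typeHS G \/ typeHC G \/ typeTW G \/ typeSD G \/ typeCD G ->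
  perfect_code_of G ('C_G[x | 'P])%g.
Proof.
move=> primG types; apply: perfect_code_of_splits.
suff [N minN splitN] : exists2 N, min_normal N G & [splits N, over 'C_N[x | 'P]].
  exact: (astab1_splits primG minN splitN).
have subdirect_splits N :
    min_normal N G -> ~~ abelian N -> subdirect 'C_N[x | 'P] N ->
  [splits N, over 'C_N[x | 'P]].
  move=> /andP[_ /minnormal_charsimple chN] nabN.
  exact: charsimple_subdirect_splits chN nabN (subsetIl _ _).
case: types => [[N [minN abN]] | [[N1 [N2 [minN1 minN2 neN12 _ _]]] |
  [[N1 [N2 [minN1 minN2 neN12 _ _]]] | [[N [[[minN _] _ _] tiNx]] |
  [[N [[[minN _] nabN _] sdN]] | [N [[[minN _] nabN _] sdN]]]]]]].
- by exists N => //; apply: (cent_min_normal_splits primG x minN abN).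
- exists N2 => //; apply: (cent_min_normal_splits primG x minN1).
  exact: min_normal_cents minN1 minN2 neN12.
- exists N2 => //; apply: (cent_min_normal_splits primG x minN1).
  exact: min_normal_cents minN1 minN2 neN12.
- by exists N => //; rewrite tiNx splits_trivg.
- by exists N => //; apply: subdirect_splits minN nabN (sdN x).1.
- by exists N => //; apply: subdirect_splits minN nabN (sdN x).1.
Qed.
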